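(* Let $X$ be a Banach space and let $M\subseteq B(X)$ be a precompact set. Then $\|M\|_{\chi}=\chi(MX_{\odot})$, where $MX_{\odot}=\{Tx: T\in M,\ x\in X,\ \|x\|\le 1\}$.
   Context: $B(X)$ is the algebra of bounded linear operators on $X$ and $X_\odot$ is the closed unit ball of $X$. For a bounded subset $E$ of a Banach space, the Hausdorff measure of noncompactness $\chi(E)$ is the infimum of all $t>0$ such that $E$ has a finite $t$-net. For $T\in B(X)$, $\|T\|_\chi=\chi(TX_\odot)$, and for a set $M\subseteq B(X)$, $\|M\|_\chi=\sup\{\|T\|_\chi: T\in M\}$. *)

From HB Require Import structures.
From mathcomp Require Import all_boot all_order all_algebra.
From mathcomp Require Import all_classical all_reals all_analysis.
Set Implicit Arguments. Unset Strict Implicit. Unset Printing Implicit Defensive.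
Import Order.TTheory GRing.Theory Num.Theory.
Import numFieldNormedType.Exports.
Local Open Scope classical_set_scope.
Local Open Scope ring_scope.

Section Defs.
Context {R : realType} {X : normedModType R}.

Definition unit_ball : set X := [set x | `|x| <= 1].

Definition bounded_op (T : X -> X) : Prop :=
  (forall (a : R) (x y : X), T (a *: x + y) = a *: T x + T y) /\
  exists C : R, forall x, `|T x| <= C * `|x|.

Definition is_net (E : set X) (F : seq X) (t : R) : Prop :=
  forall x, E x -> exists2 y, y \in F & `|x - y| <= t.

Definition hchi (E : set X) : R :=
  inf [set t : R | 0 < t /\ exists F : seq X, is_net E F t].

Definition chi_norm (T : X -> X) : R := hchi (T @` unit_ball).

Definition chi_norm_set (M : set (X -> X)) : R := sup (chi_norm @` M).

Definition apply_set (M : set (X -> X)) : set X :=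
  [set y | exists T, M T /\ exists2 x, unit_ball x & y = T x].

(* precompact (totally bounded) subset of B(X) for the operator norm:
   every ε > 0 admits a finite ε-net of bounded operators, where
   ||T - S|| <= ε is written out as sup_{||x||<=1} ||T x - S x|| <= ε. *)
Definition precompact_ops (M : set (X -> X)) : Prop :=
  forall e : R, 0 < e -> exists (n : nat) (S : 'I_n -> X -> X),
    (forall i, bounded_op (S i)) /\
    forall T, M T -> exists i : 'I_n,
      forall x, unit_ball x -> `|T x - S i x| <= e.
End Defs.

From mathcomp Require Import all_boot all_order all_algebra.
From mathcomp Require Import all_classical all_reals all_analysis.
From mathcomp Require Import lra.
Import numFieldNormedType.Exports.
Local Open Scope classical_set_scope.
Local Open Scope ring_scope.
Import Order.TTheory GRing.Theory Num.Theory.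

Set Implicit Arguments.
Unset Strict Implicit.
Unset Printing Implicit Defensive.

(* The inequality ||M||_χ <= χ(M X_⊙) is monotonicity of χ, since every
   T X_⊙ with T ∈ M is contained in M X_⊙.  For the converse, fix ε > 0 and
   an ε-net S_1, ..., S_n of M.  The operators of M that are ε-close to S_i
   are pairwise 2ε-close on X_⊙, so a near-optimal net of T_0 X_⊙ for one of
   them, T_0, is a (||M||_χ + 3ε)-net of all their images.  Concatenating
   these n nets gives χ(M X_⊙) <= ||M||_χ + 3ε. *)

Section HausdorffMeasure.
Context {R : realType} {X : normedModType R}.

(* E is bounded in the sense that some finite t-net of it exists; this is
   what makes the infimum defining χ(E) well behaved. *)
Definition has_net (E : set X) : Prop := exists F t, 0 < t /\ is_net E F t.

Lemma hchi_ge0 (E : set X) : 0 <= hchi E.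
Proof.
rewrite /hchi; set S := [set t | _].
have [->|/set0P neS] := eqVneq S set0; first by rewrite inf0.
by apply: lb_le_inf => // t [/ltW].
Qed.

Lemma hchi_le_net (E : set X) F t : 0 < t -> is_net E F t -> hchi E <= t.
Proof.
move=> t0 EF; apply: ge_inf; last by split => //; exists F.
by exists 0 => u [/ltW].
Qed.

Lemma is_net_sub (E1 E2 : set X) F t :
  E1 `<=` E2 -> is_net E2 F t -> is_net E1 F t.
Proof. by move=> E12 E2F x /E12 /E2F. Qed.

Lemma is_net_le (E : set X) F t t' : t <= t' -> is_net E F t -> is_net E F t'.
Proof.
by move=> tt' EF x /EF [y yF xy]; exists y => //; exact: le_trans tt'.
Qed.

Lemma hchi_le_sub (E1 E2 : set X) :
  E1 `<=` E2 -> has_net E2 -> hchi E1 <= hchi E2.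
Proof.
move=> E12 [F [t [t0 E2F]]]; apply: lb_le_inf.
  by exists t; split => //; exists F.
by move=> u [u0 [G E2G]]; exact: hchi_le_net u0 (is_net_sub E12 E2G).
Qed.

Lemma hchi_near_net (E : set X) e : 0 < e -> has_net E ->
  exists t F, [/\ 0 < t, is_net E F t & t < hchi E + e].
Proof.
move=> e0 [F [t [t0 EF]]].
have hinf : has_inf [set t : R | 0 < t /\ exists F, is_net E F t].
  by split; [exists t; split => //; exists F | exists 0 => u [/ltW]].
by have [u [u0 [G EG]] ue] := inf_adherent e0 hinf; exists u, G.
Qed.

Lemma is_net_approx (E E' : set X) F d t :
  (forall x, E x -> exists2 y, E' y & `|x - y| <= d) ->
  is_net E' F t -> is_net E F (d + t).
Proof.
move=> EE' E'F x /EE' [y /E'F [z zF yz] xy]; exists z => //.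
by apply: le_trans (ler_distD y x z) _; exact: lerD.
Qed.

Lemma is_net_cover (I : finType) (E : set X) (P : I -> set X)
    (F : I -> seq X) t :
  (forall x, E x -> exists i, P i x) -> (forall i, is_net (P i) (F i) t) ->
  is_net E (flatten [seq F i | i <- enum I]) t.
Proof.
move=> EP PF x /EP [i /PF [y yF xy]]; exists y => //.
by apply/flatten_mapP; exists i; rewrite ?mem_enum.
Qed.

End HausdorffMeasure.

Section OperatorSets.
Context {R : realType} {X : normedModType R}.
Implicit Types (M : set (X -> X)) (T S : X -> X).

Lemma bounded_op_ball S : bounded_op S ->
  exists c : R, forall x, unit_ball x -> `|S x| <= c.
Proof.
move=> [_ [C SC]]; exists `|C| => x x1; apply: le_trans (SC x) _.
apply: le_trans (ler_norm _) _; rewrite normrM -[leRHS]mulr1.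
by apply: ler_wpM2l; rewrite ?normr_id.
Qed.

Lemma image_sub_apply_set M T : M T -> T @` unit_ball `<=` apply_set M.
Proof. by move=> MT y [x x1 <-]; exists T; split => //; exists x. Qed.

(* M X_⊙ is bounded: it lies within 1 of the images of a 1-net of M,
   which are bounded, so a single ball around 0 covers it. *)
Lemma precompact_has_net M : precompact_ops M -> has_net (apply_set M).
Proof.
move=> /(_ 1 ltr01) [n [S [Sbd MS]]].
have [c Sc] := choice (fun i => bounded_op_ball (Sbd i)).
pose r := \big[Order.max/0]_i c i + 1.
exists [:: 0], r; split.
  by apply: lt_le_trans ltr01 _; rewrite lerDr; apply/bigmax_geP; left.
move=> _ [T [MT [x x1 ->]]]; exists 0; rewrite ?mem_head // subr0.
have [i Ti] := MS T MT; rewrite -(subrK (S i x) (T x)).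
apply: le_trans (ler_normD _ _) _; rewrite addrC /r lerD ?Ti //.
by apply/bigmax_geP; right; exists i => //; exact: Sc.
Qed.

Lemma chi_norm_le_apply M T :
  has_net (apply_set M) -> M T -> chi_norm T <= hchi (apply_set M).
Proof. by move=> Mnet MT; apply: hchi_le_sub (image_sub_apply_set MT) Mnet. Qed.

Lemma chi_norm_le_set M T :
  has_net (apply_set M) -> M T -> chi_norm T <= chi_norm_set M.
Proof.
move=> Mnet MT; apply: ub_le_sup; last by exists T.
by exists (hchi (apply_set M)) => _ [S MS <-]; exact: chi_norm_le_apply.
Qed.

Lemma chi_norm_set_le_apply M :
  has_net (apply_set M) -> chi_norm_set M <= hchi (apply_set M).
Proof.
move=> Mnet; have [->|/set0P [T MT]] := eqVneq M set0.
  by rewrite /chi_norm_set image_set0 sup0 hchi_ge0.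
apply: ge_sup; first by exists (chi_norm T), T.
by move=> _ [S MS <-]; exact: chi_norm_le_apply.
Qed.

Lemma chi_norm_set_ge0 M : has_net (apply_set M) -> 0 <= chi_norm_set M.
Proof.
move=> Mnet; have [->|/set0P [T MT]] := eqVneq M set0.
  by rewrite /chi_norm_set image_set0 sup0.
exact: le_trans (hchi_ge0 _) (chi_norm_le_set Mnet MT).
Qed.

Definition cluster M S (e : R) : set (X -> X) :=
  [set T | M T /\ forall x, unit_ball x -> `|T x - S x| <= e].

Lemma cluster_net M S e : 0 < e -> has_net (apply_set M) ->
  exists F, is_net (apply_set (cluster M S e)) F (chi_norm_set M + (e + e + e)).
Proof.
move=> e0 Mnet.
have [[T0 [MT0 T0S]]|nocl] := pselect (exists T0, cluster M S e T0); last first.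
  by exists [::] => y [T [clT _]]; case: nocl; exists T.
have T0net : has_net (T0 @` unit_ball).
  by case: Mnet => F [t [t0 MF]]; exists F, t; split => //;
     exact: is_net_sub (image_sub_apply_set MT0) MF.
have [t [F [_ T0F tlt]]] := hchi_near_net e0 T0net.
have close : forall y, apply_set (cluster M S e) y ->
    exists2 z, (T0 @` unit_ball) z & `|y - z| <= e + e.
  move=> y [T [[_ TS] [x x1 ->]]]; exists (T0 x); first by exists x.
  apply: le_trans (ler_distD (S x) _ _) _.
  by rewrite lerD ?TS // distrC T0S.
have t_le : t <= chi_norm_set M + e.
  by apply: le_trans (ltW tlt) _; rewrite lerD2r chi_norm_le_set.
by exists F; apply: is_net_le (is_net_approx close T0F); lra.
Qed.

Lemma hchi_apply_set_le M e : 0 < e -> precompact_ops M ->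
  hchi (apply_set M) <= chi_norm_set M + (e + e + e).
Proof.
move=> e0 hM; have Mnet := precompact_has_net hM.
have [n [S [_ MS]]] := hM e e0.
have [F clF] := choice (fun i : 'I_n => cluster_net (S i) e0 Mnet).
have pos : 0 < chi_norm_set M + (e + e + e).
  by have := chi_norm_set_ge0 Mnet; lra.
apply: hchi_le_net pos (is_net_cover _ clF).
move=> y [T [MT [x x1 ->]]]; have [i Ti] := MS T MT.
by exists i; exists T; split => //; exists x.
Qed.

End OperatorSets.

Theorem lemma2p1 (R : realType) (X : completeNormedModType R)
  (M : set (X -> X)) (hB : forall T, M T -> bounded_op T)
  (hM : precompact_ops M) :
  chi_norm_set M = hchi (apply_set M).
Proof.
have Mnet := precompact_has_net hM.
apply/eqP; rewrite eq_le; apply/andP; split.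
- exact: chi_norm_set_le_apply.
- apply/ler_addgt0Pr => e e0.
  have e30 : 0 < e / 3 by rewrite divr_gt0.
  by have := hchi_apply_set_le e30 hM; lra.
Qed.
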